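(* Let $K$ be a field of characteristic zero, let $(p_n(x))_{n\ge 0}$ be a sequence of polynomials in $K[x]$ with $\deg p_n=n$, and let $F^{(y)}:K[x]\to K[x,y]$ be a $K$-linear operator which is shift-invariant, i.e. $F^{(y)}E^{c}=E^{c}F^{(y)}$ for every $c\in K$. Then the following are equivalent: (1) for all $n\ge 0$, $F^{(y)}p_n(x)=\sum_{k=0}^{n}p_k(x)\,p_{n-k}(y)$; (2) the operator $P_x=\epsilon_y\circ F^{(y)}$ is an invertible shift-invariant operator on $K[x]$, the sequence $(p_n(x))_{n\ge0}$ is a Sheffer sequence relative to the divided power sequence $(P_x^{-1}p_n(x))_{n\ge 0}$, and $F^{(y)}=P_yE^{y}$.
   Context: For $c\in K$, $E^{c}$ denotes the shift $p(x)\mapsto p(x+c)$ (acting on the variable $x$, on $K[x]$ or on $K[x,y]$), and $E^{y}:K[x]\to K[x,y]$ is $p(x)\mapsto p(x+y)$. An operator on $K[x]$ is shift-invariant if it commutes with all $E^{c}$, $c\in K$. $\epsilon_y:K[x,y]\to K[x]$ is evaluation at $y=0$. For an operator $\phi_x$ on $K[x]$, $\phi_y$ denotes the corresponding operator on $K[y]$ obtained by renaming $x$ to $y$ (i.e. $\phi_y\circ\pi=\pi\circ\phi_x$ with $\pi:K[x]\to K[y]$ the isomorphism $x\mapsto y$), extended $K[x]$-linearly to $K[x,y]$; operators on $K[x]$ are extended $K[y]$-linearly to $K[x,y]$. A divided power sequence is a sequence of polynomials $(q_n(x))_{n\ge0}$ with $\deg q_n=n$ and $q_n(x+y)=\sum_{k=0}^n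 q_k(x)q_{n-k}(y)$ for all $n$. A sequence $(s_n(x))_{n\ge0}$ with $\deg s_n=n$ is Sheffer relative to a divided power sequence $(q_n)$ if $s_n(x+y)=\sum_{k=0}^{n}q_{n-k}(y)\,s_k(x)$ for all $n$. *)

From mathcomp Require Import all_boot all_order all_algebra.
Set Implicit Arguments.
Unset Strict Implicit.
Unset Printing Implicit Defensive.
Import GRing.Theory.
Local Open Scope ring_scope.

(* Convention: K[x] = {poly K}; K[x,y] = {poly {poly K}} following polyXY.v:
   the OUTER variable is x ('X), the INNER variable is y ('Y = 'X%:P).
   A polynomial p(x) in K[x] embeds as p^:P, a polynomial q(y) as q%:P. *)

Definition shift (K : fieldType) (c : K) (p : {poly K}) : {poly K} :=
  p \Po ('X + c%:P).

(* Extension of an operator on K[x] to K[x,y], K[y]-linearly (acts on x). *)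
Definition ext_x (K : fieldType) (A : {poly K} -> {poly K})
  (u : {poly {poly K}}) : {poly {poly K}} :=
  swapXY (map_poly A (swapXY u)).

(* phi_y : the operator phi renamed to act on y, extended K[x]-linearly. *)
Definition ext_y (K : fieldType) (A : {poly K} -> {poly K})
  (u : {poly {poly K}}) : {poly {poly K}} :=
  map_poly A u.

Definition Ey (K : fieldType) (p : {poly K}) : {poly {poly K}} := poly_XaY p.

Definition eps_y (K : fieldType) (u : {poly {poly K}}) : {poly K} :=
  map_poly (fun q : {poly K} => q.[0]) u.

Definition linear_xy (K : fieldType) (F : {poly K} -> {poly {poly K}}) :=
  forall (a : K) (p q : {poly K}), F (a *: p + q) = a%:P%:P * F p + F q.

Definition linear_x (K : fieldType) (A : {poly K} -> {poly K}) :=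
  forall (a : K) (p q : {poly K}), A (a *: p + q) = a *: A p + A q.

Definition shift_invariant (K : fieldType) (A : {poly K} -> {poly K}) :=
  forall (c : K) (p : {poly K}), A (shift c p) = shift c (A p).

Definition shift_invariant_xy (K : fieldType)
  (F : {poly K} -> {poly {poly K}}) :=
  forall (c : K) (p : {poly K}), F (shift c p) = ext_x (shift c) (F p).

Definition divided_power (K : fieldType) (q : nat -> {poly K}) :=
  (forall n, size (q n) = n.+1) /\
  (forall n, Ey (q n) = \sum_(k < n.+1) (q k)^:P * (q (n - k)%N)%:P).

Definition sheffer (K : fieldType) (s q : nat -> {poly K}) :=
  (forall n, size (s n) = n.+1) /\
  (forall n, Ey (s n) = \sum_(k < n.+1) (q (n - k)%N)%:P * (s k)^:P).

(* Hypothesis (1) on the basis (p_n) makes F(r) symmetric in x and y for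
   every r, so the shift invariance of F in x is also one in y.  Evaluating x
   at a constant a then gives F(r)(a, y) = (P E^a r)(y) = (E^a P r)(y), and
   since in characteristic zero a polynomial is determined by its values at
   constants, F = P_y E^y = E^y P.  As P p_n = sum_k p_(n-k)(0) p_k has
   degree n, P is bijective, and applying the injective P_y to the expansions
   of E^y p_n and E^y (P^-1 p_n) reduces them to (1).  Conversely, applying
   P_y to the Sheffer expansion of E^y p_n gives (1). *)

From HB Require Import structures.
From mathcomp Require Import all_boot all_order all_algebra.
Import GRing.Theory.
Local Open Scope ring_scope.
Set Implicit Arguments.
Unset Strict Implicit.
Unset Printing Implicit Defensive.

Lemma natr_inj_pchar0 (R : idomainType) :
  [pchar R] =i pred0 -> injective (fun n : nat => n%:R : R).
Proof.
move=> charR m n /= eq_mn; have natr_eq0 := (pcharf0P R).1 charR.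
wlog le_mn : m n eq_mn / (m <= n)%N.
  by move=> IH; case/orP: (leq_total m n) => /IH; [apply | move=> ->].
have : (n - m)%:R == 0 :> R by rewrite natrB // eq_mn subrr.
by rewrite natr_eq0 subn_eq0 => le_nm; apply/eqP; rewrite eqn_leq le_mn.
Qed.

Lemma poly_eq0_inj_roots (R : idomainType) (g : nat -> R) (w : {poly R}) :
  injective g -> (forall n, root w (g n)) -> w = 0.
Proof.
move=> inj_g w_g.
apply: (@roots_geq_poly_eq0 _ _ [seq g i | i <- iota 0 (size w)]).
- by apply/allP => _ /mapP [i _ ->].
- by rewrite map_inj_uniq ?iota_uniq.
- by rewrite size_map size_iota.
Qed.

Lemma polyXY_eq_on_constants (K : fieldType) (u v : {poly {poly K}}) :
  [pchar K] =i pred0 -> (forall a : K, u.[a%:P] = v.[a%:P]) -> u = v.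
Proof.
move=> charK uv; apply/eqP; rewrite -subr_eq0; apply/eqP.
apply: (@poly_eq0_inj_roots _ (fun n => n%:R%:P)).
  by move=> m n /polyC_inj /(natr_inj_pchar0 charK).
by move=> n; rewrite /root hornerD hornerN uv subrr.
Qed.

Section PolyBasis.
Variables (K : fieldType) (p : nat -> {poly K}).
Hypothesis size_p : forall n, size (p n) = n.+1.

Lemma poly_top_decomp m (r : {poly K}) : (size r <= m.+1)%N ->
  exists c (s : {poly K}), r = c *: p m + s /\ (size s <= m)%N.
Proof.
move=> size_r; have pm_neq0 : p m != 0 by rewrite -size_poly_eq0 size_p.
have div_const : r %/ p m = ((r %/ p m)`_0)%:P.
  by apply: size1_polyC; rewrite size_divp // size_p leq_subLR addn1.
exists (r %/ p m)`_0, (r %% p m); split.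
  by rewrite -mul_polyC -div_const; apply: divp_eq.
by rewrite -ltnS -(size_p m) ltn_modpN0.
Qed.

Lemma poly_basis_ind (Q : {poly K} -> Prop) :
  Q 0 -> (forall n, Q (p n)) ->
  (forall c r s, Q r -> Q s -> Q (c *: r + s)) -> forall r, Q r.
Proof.
move=> Q0 Qp QD r; elim: (size r) {-2}r (leqnn (size r)) => [|m IH] {}r size_r.
  by move: size_r; rewrite leqn0 size_poly_eq0 => /eqP ->.
have [c [s [-> size_s]]] := poly_top_decomp size_r.
by apply: QD; [apply: Qp | apply: IH].
Qed.

Lemma size_sum_scale_basis (c : nat -> K) n : c n != 0 ->
  size (\sum_(k < n.+1) c k *: p k) = n.+1.
Proof.
move=> cn_neq0; have size_init : (size (\sum_(k < n) c k *: p k)%R < n.+1)%N.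
  rewrite ltnS; apply/leq_sizeP => j le_nj; rewrite coef_sum big1 // => k _.
  by rewrite coefZ nth_default ?mulr0 // size_p (leq_trans (ltn_ord k)).
by rewrite big_ord_recr /= addrC size_polyDl size_scale ?size_p.
Qed.

End PolyBasis.

Lemma eps_yE (K : fieldType) (u : {poly {poly K}}) :
  eps_y u = map_poly (horner_eval 0) u.
Proof. by []. Qed.

Section Convolution.
Variable K : fieldType.
Implicit Types a b : nat -> {poly K}.

Definition convXY a b n : {poly {poly K}} :=
  \sum_(k < n.+1) (a k)^:P * (b (n - k)%N)%:P.

Lemma convXY_commE a b n :
  convXY a b n = \sum_(k < n.+1) (b (n - k)%N)%:P * (a k)^:P.
Proof. by apply: eq_bigr => k _; rewrite mulrC. Qed.

Lemma swapXY_convXY a b n : swapXY (convXY a b n) = convXY b a n.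
Proof.
rewrite rmorph_sum (reindex_inj rev_ord_inj) /=; apply: eq_bigr => k _.
rewrite rmorphM /= swapXY_map_polyC swapXY_polyC subSS subKn 1?mulrC //.
by rewrite -ltnS.
Qed.

Lemma eps_y_convXY a b n :
  eps_y (convXY a b n) = \sum_(k < n.+1) (b (n - k)%N).[0] *: a k.
Proof.
rewrite eps_yE rmorph_sum; apply: eq_bigr => k _.
apply/polyP => i; rewrite coef_map /= coefMC coef_map /= coefZ.
by rewrite horner_evalE hornerCM mulrC.
Qed.

End Convolution.

Section LinearOperator.
Variables (K : fieldType) (A : {poly K} -> {poly K}).
Hypothesis linA : linear_x A.

HB.instance Definition _ := GRing.isLinear.Build K {poly K} {poly K} _ A linA.

Lemma horner_map_linear (u : {poly {poly K}}) (a : K) :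
  (map_poly A u).[a%:P] = A u.[a%:P].
Proof.
rewrite (horner_coef_wide _ (size_poly _ _)) horner_coef linear_sum.
apply: eq_bigr => i _.
by rewrite coef_map -polyC_exp !(mulrC _ _%:P) !mul_polyC linearZ.
Qed.

Lemma map_poly_linear_inj : injective A -> injective (map_poly A).
Proof.
move=> inj_A u v /polyP eq_uv; apply/polyP => i.
by apply: inj_A; rewrite -!coef_map eq_uv.
Qed.

Lemma map_convXY a b c n : (forall k, A (b k) = c k) ->
  map_poly A (convXY a b n) = convXY a c n.
Proof.
move=> Ab; rewrite raddf_sum; apply: eq_bigr => k _.
apply/polyP => i.
by rewrite coef_map !coefMC coef_map /= !mul_polyC -Ab linearZ.
Qed.

Lemma size_linear_basis (p : nat -> {poly K}) :
  (forall n, size (p n) = n.+1) -> (forall n, size (A (p n)) = n.+1) ->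
  forall r, size (A r) = size r.
Proof.
move=> size_p size_Ap r.
elim: (size r) {-2}r (leqnn (size r)) => [|m IH] {}r size_r.
  by move: size_r; rewrite leqn0 size_poly_eq0 => /eqP ->; rewrite linear0.
have [c [s [-> size_s]]] := poly_top_decomp size_p size_r.
have [-> | c_neq0] := eqVneq c 0; first by rewrite scale0r add0r IH.
have size_As : (size (A s) < m.+1)%N by rewrite IH.
by rewrite linearD linearZ !size_polyDl ?size_scale ?size_p ?size_Ap.
Qed.

Lemma linear_basis_bij (p : nat -> {poly K}) :
  (forall n, size (p n) = n.+1) -> (forall n, size (A (p n)) = n.+1) ->
  bijective A.
Proof.
move=> size_p size_Ap.
have inj_A : injective A.
  move=> r s /eqP; rewrite -subr_eq0 -linearB -size_poly_eq0.
  by rewrite (size_linear_basis size_p size_Ap) size_poly_eq0 subr_eq0 => /eqP.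
have surj_A s : exists r, A r == s.
  move: s; apply: (poly_basis_ind size_Ap).
  - by exists 0; rewrite linear0.
  - by move=> n; exists (p n).
  - move=> c _ _ [r /eqP <-] [r' /eqP <-].
    by exists (c *: r + r'); rewrite linearP.
pose B s := xchoose (surj_A s).
have AK : cancel B A by move=> s; apply/eqP/(xchooseP (surj_A s)).
by exists B => // r; apply: inj_A; rewrite AK.
Qed.

End LinearOperator.

Section ShiftAndEvaluation.
Variable K : fieldType.
Implicit Types (r : {poly K}) (u : {poly {poly K}}).

Lemma shift_linear (c : K) : linear_x (shift c).
Proof. by move=> a r s; rewrite /shift comp_polyD comp_polyZ. Qed.

Lemma horner_Ey r (a : K) : (Ey r).[a%:P] = shift a r.
Proof. by rewrite /Ey horner_poly_XaY /shift addrC. Qed.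

Lemma eps_y_ext_x (B : {poly K} -> {poly K}) u :
  linear_x B -> eps_y (ext_x B u) = B (eps_y u).
Proof.
by move=> linB; rewrite !eps_yE -!horner_swapXY swapXYK horner_map_linear.
Qed.

Lemma eps_y_map_shift (a : K) u :
  eps_y (map_poly (shift a) u) = (swapXY u).[a%:P].
Proof.
rewrite eps_yE horner_swapXY -map_poly_comp; apply: eq_map_poly => r /=.
by rewrite !horner_evalE /shift horner_comp hornerD hornerX hornerC add0r.
Qed.

End ShiftAndEvaluation.

Definition eps_op (K : fieldType) (F : {poly K} -> {poly {poly K}}) r :
  {poly K} := eps_y (F r).

Section TwoVariableOperators.
Variables (K : fieldType) (F : {poly K} -> {poly {poly K}}).

Lemma linear_xy0 : linear_xy F -> F 0 = 0.
Proof.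
move=> linF; have := linF (-1) 0 0.
by rewrite scaler0 addr0 polyCN polyCN polyC1 mulN1r addNr.
Qed.

Lemma linear_eps_op : linear_xy F -> linear_x (eps_op F).
Proof.
move=> linF a r s; rewrite /eps_op !eps_yE linF rmorphD rmorphM /= map_polyC.
by rewrite /= horner_evalE hornerC mul_polyC.
Qed.

Lemma shift_invariant_eps_op :
  shift_invariant_xy F -> shift_invariant (eps_op F).
Proof.
by move=> siF c r; rewrite /eps_op siF eps_y_ext_x //; apply: shift_linear.
Qed.

Lemma convXY_of_sheffer (p : nat -> {poly K}) P Pinv :
  linear_x P -> cancel Pinv P -> sheffer p (fun n => Pinv (p n)) ->
  (forall r, F r = ext_y P (Ey r)) -> forall n, F (p n) = convXY p p n.
Proof.
move=> linP PinvK [_ Ey_p] F_def n.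
rewrite F_def /ext_y Ey_p -(convXY_commE p (fun k => Pinv (p k))).
exact: map_convXY.
Qed.

End TwoVariableOperators.

Section Expansion.
Variables (K : fieldType) (p : nat -> {poly K}).
Variable F : {poly K} -> {poly {poly K}}.
Hypotheses (charK : [pchar K] =i pred0) (size_p : forall n, size (p n) = n.+1).
Hypotheses (linF : linear_xy F) (siF : shift_invariant_xy F).
Hypothesis F_p : forall n, F (p n) = convXY p p n.

Local Notation P := (eps_op F).
Let linP : linear_x P := linear_eps_op linF.

Lemma swapXY_F r : swapXY (F r) = F r.
Proof.
elim/(poly_basis_ind size_p): r => [|n|c r s Fr_sym Fs_sym].
- by rewrite linear_xy0 // rmorph0.
- by rewrite F_p swapXY_convXY.
- by rewrite linF rmorphD rmorphM /= Fr_sym Fs_sym swapXY_polyC map_polyC.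
Qed.

Lemma F_shift_y c r : F (shift c r) = map_poly (shift c) (F r).
Proof. by rewrite -[LHS]swapXY_F siF /ext_x swapXYK swapXY_F. Qed.

Lemma eps_op_shift a r : P (shift a r) = (F r).[a%:P].
Proof. by rewrite /eps_op F_shift_y eps_y_map_shift swapXY_F. Qed.

Lemma F_eq_map_Ey r : F r = map_poly P (Ey r).
Proof.
apply: (polyXY_eq_on_constants charK) => a.
by rewrite horner_map_linear // horner_Ey eps_op_shift.
Qed.

Lemma F_eq_Ey r : F r = Ey (P r).
Proof.
apply: (polyXY_eq_on_constants charK) => a.
by rewrite horner_Ey -shift_invariant_eps_op // eps_op_shift.
Qed.

Lemma size_eps_op_basis n : size (P (p n)) = n.+1.
Proof.
have /size_poly1P [c c_neq0 p0_const] : size (p 0) == 1 by rewrite size_p.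
rewrite /eps_op F_p eps_y_convXY.
rewrite (size_sum_scale_basis size_p (c := fun k => (p (n - k)%N).[0])) //.
by rewrite subnn p0_const hornerC.
Qed.

Lemma bijective_eps_op : bijective P.
Proof. exact: (@linear_basis_bij _ _ linP p size_p size_eps_op_basis). Qed.

Variable Pinv : {poly K} -> {poly K}.
Hypotheses (PK : cancel P Pinv) (PinvK : cancel Pinv P).

Lemma Ey_basis n : Ey (p n) = convXY p (fun k => Pinv (p k)) n.
Proof.
apply: (map_poly_linear_inj linP (can_inj PK)).
by rewrite -F_eq_map_Ey F_p (map_convXY linP _ _ (fun k => PinvK (p k))).
Qed.

Lemma sheffer_eps_op_inv : sheffer p (fun n => Pinv (p n)).
Proof. by split=> // n; rewrite Ey_basis convXY_commE. Qed.

Lemma divided_power_eps_op_inv : divided_power (fun n => Pinv (p n)).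
Proof.
have size_P := size_linear_basis linP size_p size_eps_op_basis.
split=> n; first by rewrite -size_P PinvK.
change (Ey (Pinv (p n)) = convXY (fun k => Pinv (p k)) (fun k => Pinv (p k)) n).
apply: (map_poly_linear_inj linP (can_inj PK)).
rewrite -F_eq_map_Ey F_eq_Ey PinvK /Ey -swapXY_poly_XaY -/(Ey _) Ey_basis.
by rewrite swapXY_convXY (map_convXY linP _ _ (fun k => PinvK (p k))).
Qed.

End Expansion.

Theorem theorem1 (K : fieldType) (charK : [pchar K] =i pred0)
  (p : nat -> {poly K}) (Hdeg : forall n, size (p n) = n.+1)
  (F : {poly K} -> {poly {poly K}})
  (Flin : linear_xy F) (Fsi : shift_invariant_xy F) :
  (forall n, F (p n) = \sum_(k < n.+1) (p k)^:P * (p (n - k)%N)%:P)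
  <->
  (let P := fun r => eps_y (F r) in
   linear_x P /\ shift_invariant P /\
   exists Pinv : {poly K} -> {poly K},
     [/\ cancel P Pinv, cancel Pinv P,
         divided_power (fun n => Pinv (p n)),
         sheffer p (fun n => Pinv (p n)) &
         forall r, F r = ext_y P (Ey r)]).
Proof.
split=> [F_p P | [linP [_ [Pinv [_ PinvK _ sheffer_p F_def]]]]]; last first.
  exact: convXY_of_sheffer linP PinvK sheffer_p F_def.
have [Pinv PK PinvK] := bijective_eps_op Hdeg Flin F_p.
split; first exact: linear_eps_op.
split; first exact: shift_invariant_eps_op.
exists Pinv; split=> //.
- exact: divided_power_eps_op_inv.
- exact: sheffer_eps_op_inv.
- exact: F_eq_map_Ey.
Qed.
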